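(* The map $T\colon\mathcal{I}_\alpha\to\mathbb{T}$ defined by $T(\beta)=([0,\mathscr{D}_\beta(\infty)],d,M(\beta))$, where $d$ is the Euclidean metric restricted to $[0,\mathscr{D}_\beta(\infty)]$ and $M(\beta)=\sum_{U\in\beta}\mathrm{Leb}(U)\,\delta_{\mathscr{D}_\beta(U)}$, is continuous from $(\mathcal{I}_\alpha,d_\alpha)$ to $\mathbb{T}$.
   Context: Fix $\alpha\in(0,1)$. $\mathbb{T}$ denotes the space of isometry classes of compact rooted weighted $\mathbb{R}$-trees (rooted compact real trees equipped with a finite Borel measure), equipped with the Gromov--Hausdorff--Prokhorov metric; the segment $[0,\mathscr{D}_\beta(\infty)]$ is rooted at $0$. An interval partition is a set $\beta$ of disjoint open subintervals (blocks) of some interval $[0,L]$ that cover $[0,L]$ up to a Lebesgue-null set; write $\|\beta\|:=L$ and $\mathrm{Leb}(U)$ for the length of a block $U$. A partition $\beta$ has the $\alpha$-diversity property if for every $t\in[0,\|\beta\|]$ the limit $\mathscr{D}_\beta(t):=\Gamma(1-\alpha)\lim_{h\downarrow0}h^\alpha\#\{(a,b)\in\beta\colon b-a>h,\ b\le t\}$ exists; $\mathcal{I}_\alpha$ is the set of such partitions. For $U\in\beta$, $\mathscr{D}_\beta(U):=\mathscr{D}_\beta(t)$ for any $t\in U$, and $\mathscr{D}_\beta(\infty):=\mathscr{D}_\beta(\|\beta\|)$. A correspondence between $\beta,\gamma\in\mathcal{I}_\alpha$ is a finite sequence $(U_j,V_j)_{j\in[n]}$, $n\ge0$, of pairs in $\beta\times\gamma$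 with $(U_j)_j$ and $(V_j)_j$ each strictly increasing in left-to-right order. Its $\alpha$-distortion is the maximum of (i) $\sum_{j}|\mathrm{Leb}(U_j)-\mathrm{Leb}(V_j)|+\|\beta\|-\sum_j\mathrm{Leb}(U_j)$, (ii) $\sum_{j}|\mathrm{Leb}(U_j)-\mathrm{Leb}(V_j)|+\|\gamma\|-\sum_j\mathrm{Leb}(V_j)$, (iii) $\sup_{j}|\mathscr{D}_\beta(U_j)-\mathscr{D}_\gamma(V_j)|$, (iv) $|\mathscr{D}_\beta(\infty)-\mathscr{D}_\gamma(\infty)|$. $d_\alpha(\beta,\gamma)$ is the infimum of the $\alpha$-distortion over all correspondences. *)

From HB Require Import structures.
From mathcomp Require Import all_boot all_order all_algebra.
From mathcomp Require Import finmap.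
From mathcomp Require Import all_classical all_reals all_analysis.
Set Implicit Arguments.
Unset Strict Implicit.
Unset Printing Implicit Defensive.
Import Order.TTheory GRing.Theory Num.Theory.
Import numFieldNormedType.Exports.
Local Open Scope classical_set_scope.
Local Open Scope ring_scope.

Section Defs.
Variable R : realType.

Definition Gamma (s : R) : R :=
  fine (\int[@lebesgue_measure R]_(x in `]0%R, +oo[)
          ((x `^ (s - 1)) * expR (- x))%:E).

(* A block U of an interval partition is the open interval ]U.1, U.2[,
   encoded by its endpoints (U.1 < U.2). *)
Definition block_set (U : R * R) : set R := `]U.1, U.2[%classic.
Definition Leb (U : R * R) : R := U.2 - U.1.

Definition is_interval_partition (L : R) (beta : set (R * R)) : Prop :=
  [/\ 0 <= L,
      (forall U, beta U -> 0 <= U.1 /\ U.1 < U.2 /\ U.2 <= L),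
      (forall U V, beta U -> beta V -> U <> V ->
         block_set U `&` block_set V = set0)
    & (@lebesgue_measure R).-negligible
        (`[0, L]%classic `\` \bigcup_(U in beta) block_set U)].

Record IP := MkIP {
  ip_len : R;
  ip_blocks : set (R * R);
  ip_ok : is_interval_partition ip_len ip_blocks }.

(* #{(a,b) in beta : b - a > h, b <= t} (finite for h > 0) *)
Definition count_blocks (beta : IP) (h t : R) : nat :=
  #|` fset_set [set U | ip_blocks beta U /\ h < Leb U /\ U.2 <= t] |%fset.

Definition div_approx (alpha : R) (beta : IP) (t : R) : R -> R :=
  fun h => Gamma (1 - alpha) * (h `^ alpha * (count_blocks beta h t)%:R).

Definition has_diversity (alpha : R) (beta : IP) : Prop :=
  forall t, 0 <= t <= ip_len beta -> cvg (div_approx alpha beta t @ 0^'+).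

Definition Div (alpha : R) (beta : IP) (t : R) : R :=
  lim (div_approx alpha beta t @ 0^'+).

(* D_beta(U) := D_beta(t) for t in U (here the midpoint) *)
Definition DivU (alpha : R) (beta : IP) (U : R * R) : R :=
  Div alpha beta ((U.1 + U.2) / 2).

Definition Div_inf (alpha : R) (beta : IP) : R := Div alpha beta (ip_len beta).

Definition is_correspondence (beta gamma : IP) (s : seq ((R * R) * (R * R)))
  : Prop :=
  (forall p, p \in s -> ip_blocks beta p.1 /\ ip_blocks gamma p.2) /\
  sorted (fun p q => (p.1.1 < q.1.1) && (p.2.1 < q.2.1)) s.

Definition distortion (alpha : R) (beta gamma : IP)
    (s : seq ((R * R) * (R * R))) : R :=
  let dl := \sum_(p <- s) `|Leb p.1 - Leb p.2| in
  Num.max (Num.max (dl + ip_len beta - \sum_(p <- s) Leb p.1)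
                   (dl + ip_len gamma - \sum_(p <- s) Leb p.2))
          (Num.max (\big[Num.max/0]_(p <- s)
                       `|DivU alpha beta p.1 - DivU alpha gamma p.2|)
                   `|Div_inf alpha beta - Div_inf alpha gamma|).

Definition d_alpha (alpha : R) (beta gamma : IP) : R :=
  inf [set distortion alpha beta gamma s | s in
        [set s | is_correspondence beta gamma s]].

Record rmms := MkRMMS {
  car : Type;
  pts : set car;
  dist : car -> car -> R;
  root : car;
  meas : set car -> \bar R }.
Arguments car : clear implicits.
Arguments pts : clear implicits.
Arguments dist : clear implicits.
Arguments root : clear implicits.
Arguments meas : clear implicits.

Definition is_metric (Z : Type) (d : Z -> Z -> R) : Prop :=
  (forall x y, d x y = 0 <-> x = y) /\ (forall x y, d x y = d y x) /\
  (forall x y z, d x z <= d x y + d y z).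

Definition nbhd_e (Z : Type) (d : Z -> Z -> R) (A : set Z) (e : R) : set Z :=
  [set z | exists2 a, A a & d z a < e].

Definition closed_d (Z : Type) (d : Z -> Z -> R) (A : set Z) : Prop :=
  forall z, (forall e, 0 < e -> exists2 a, A a & d z a < e) -> A z.

Definition hausdorff (Z : Type) (d : Z -> Z -> R) (A B : set Z) : R :=
  inf [set e | 0 < e /\ A `<=` nbhd_e d B e /\ B `<=` nbhd_e d A e].

Definition prokhorov (Z : Type) (d : Z -> Z -> R) (mu nu : set Z -> \bar R)
  : R :=
  inf [set e | 0 < e /\ forall A, closed_d d A ->
         (mu A <= nu (nbhd_e d A e) + e%:E)%E /\
         (nu A <= mu (nbhd_e d A e) + e%:E)%E].

Definition isometric_on (X Z : Type) (S : set X) (dX : X -> X -> R)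
  (dZ : Z -> Z -> R) (f : X -> Z) : Prop :=
  forall x y, S x -> S y -> dZ (f x) (f y) = dX x y.

Definition ghp_dist (X Y : rmms) : R :=
  inf [set r | exists (Z : Type) (dZ : Z -> Z -> R)
                  (f : car X -> Z) (g : car Y -> Z),
     [/\ is_metric dZ, isometric_on (pts X) (dist X) dZ f,
         isometric_on (pts Y) (dist Y) dZ g &
         r = Num.max (hausdorff dZ (f @` pts X) (g @` pts Y))
               (Num.max (dZ (f (root X)) (g (root Y)))
                  (prokhorov dZ (fun A => meas X (f @^-1` A))
                                (fun A => meas Y (g @^-1` A))))]].

Definition M_meas (alpha : R) (beta : IP) (A : set R) : \bar R :=
  (\esum_(U in [set U | ip_blocks beta U /\ A (DivU alpha beta U)])
     (Leb U)%:E)%E.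

Definition T_tree (alpha : R) (beta : IP) : rmms :=
  @MkRMMS R `[0, Div_inf alpha beta]%classic (fun x y => `|x - y|) 0
          (M_meas alpha beta).

End Defs.

From Pilot Require Import Defs.
(* T is 1-Lipschitz from (I_alpha, d_alpha) to T, for every alpha.  Embed both
   segments into R by the identity.  Given a correspondence of distortion < e,
   the lengths D(oo) differ by < e, so the segments are e-close in Hausdorff
   distance, and the roots coincide.  For the Prokhorov distance, the mass
   M(beta)(A) is carried by matched blocks U_j, whose partners V_j have
   D-values within e of A and lengths differing by sum |Leb U_j - Leb V_j|,
   and by unmatched blocks, of total length ||beta|| - sum Leb U_j; together
   the excess is at most e. *)
From HB Require Import structures.
From mathcomp Require Import all_boot all_order all_algebra.
From mathcomp Require Import all_classical all_reals all_analysis.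
From mathcomp Require Import lra.
Set Implicit Arguments.
Unset Strict Implicit.
Unset Printing Implicit Defensive.
Import Order.TTheory GRing.Theory Num.Theory.
Import numFieldNormedType.Exports.
Local Open Scope classical_set_scope.
Local Open Scope ring_scope.

Local Notation dR := (fun x y => `|x - y|).

Lemma ler_sum_uniq_subset (T : eqType) (R : numDomainType) (F : T -> R)
    (l l' : seq T) :
  uniq l -> uniq l' -> {subset l <= l'} -> {in l', forall x, 0 <= F x} ->
  \sum_(x <- l) F x <= \sum_(x <- l') F x.
Proof.
move=> ul ul' sub F0.
have perm_l : perm_eq l [seq x <- l' | x \in l].
  apply: uniq_perm => //; first exact: filter_uniq.
  by move=> x; rewrite mem_filter; case xl: (x \in l) => //=; rewrite sub.
rewrite (perm_big _ perm_l) big_filter [X in _ <= X](bigID (mem l)) /= lerDl.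
by rewrite big_seq_cond; apply: sumr_ge0 => x /andP[/F0].
Qed.

Section IntervalPartition.
Variable R : realType.
Implicit Types (b g : IP R) (U : R * R).

Lemma Leb_ge0 b U : ip_blocks b U -> 0 <= Leb U.
Proof. by case: b => L B [_ Hb _ _] /= /Hb [_ [U12 _]]; rewrite subr_ge0 ltW. Qed.

Lemma sum_Leb_le_len b (l : seq (R * R)) :
  uniq l -> {in l, forall U, ip_blocks b U} -> \sum_(U <- l) Leb U <= ip_len b.
Proof.
case: b => L B [L0 Hb Hd _] /= ul lB.
have mB U : measurable (block_set U) by exact: measurable_itv.
have tr : trivIset [set` l] (@block_set R).
  move=> U V /= Ul Vl [x [xU xV]]; have [//|/eqP UV] := eqVneq U V.
  by have /seteqP[/(_ x (conj xU xV))] := Hd U V (lB _ Ul) (lB _ Vl) UV.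
have := measure_fin_bigcup lebesgue_measure (finite_seq l) tr (fun U _ => mB U).
rewrite -fsbig_seq //.
have -> : \sum_(U <- l) lebesgue_measure (block_set U) = \sum_(U <- l) (Leb U)%:E.
  apply: eq_big_seq => U /lB /Hb [_ [U12 _]].
  by rewrite lebesgue_measure_itv /= lte_fin U12 EFinB.
rewrite sumEFin -lee_fin => <-.
have <- : lebesgue_measure (`[0, L]%classic : set R) = L%:E.
  rewrite lebesgue_measure_itv /= lte_fin.
  case: ltP => [_|L0']; first by rewrite oppr0 addr0.
  by have -> : L = 0 by apply/eqP; rewrite eq_le L0' L0.
apply: le_measure; rewrite ?inE.
- by apply: fin_bigcup_measurable; [exact: finite_seq | move=> U _; exact: mB].
- exact: measurable_itv.
- move=> x [U /= Ul]; rewrite /block_set /= !in_itv /= => /andP[Ux xU].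
  have [U0 [_ UL]] := Hb _ (lB _ Ul).
  by rewrite (le_trans U0 (ltW Ux)) (le_trans (ltW xU) UL).
Qed.

Lemma correspondence_uniq b g s : is_correspondence b g s ->
  uniq (map fst s) /\ uniq (map snd s).
Proof.
have lt_uniq (t : seq (R * R)) : sorted (fun U V => U.1 < V.1) t -> uniq t.
  by apply: sorted_uniq; [move=> ? ? ?; exact: lt_trans | move=> ?; rewrite ltxx].
by move=> [_ so]; split; apply: lt_uniq; rewrite sorted_map;
  apply: sub_sorted so => p q /andP[].
Qed.

Lemma correspondence_swap b g s : is_correspondence b g s ->
  is_correspondence g b [seq (p.2, p.1) | p <- s].
Proof.
move=> [hin so]; split.
- by move=> _ /mapP [p ps ->]; have [] := hin p ps.
- by rewrite sorted_map; apply: sub_sorted so => p q; rewrite andbC.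
Qed.

Lemma Gamma_ge0 (x : R) : 0 <= Gamma x.
Proof.
apply: fine_ge0; apply: integral_ge0 => y _.
by rewrite lee_fin mulr_ge0 ?powR_ge0 ?expR_ge0.
Qed.

Lemma Div_inf_ge0 (alpha : R) b : has_diversity alpha b -> 0 <= Div_inf alpha b.
Proof.
move=> hb; apply: limr_ge.
  by apply: hb; have [L0 _ _ _] := ip_ok b; rewrite L0 lexx.
by apply: nearW => h; rewrite mulr_ge0 ?Gamma_ge0 ?mulr_ge0 ?powR_ge0.
Qed.

End IntervalPartition.

Section Measure.
Import finmap.
Variables (R : realType) (alpha : R).
Implicit Types (b g : IP R) (l : seq (R * R)).

(* Of the blocks listed in [l], only those outside [A] are certainly missed by
   [M_meas alpha b A]; every other block fits in the remaining length. *)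
Lemma M_meas_le_len_sub b l A : uniq l -> {in l, forall U, ip_blocks b U} ->
  (M_meas alpha b A <=
   (ip_len b - \sum_(U <- l | ~~ `[< A (DivU alpha b U) >]) Leb U)%:E)%E.
Proof.
move=> ul lb; apply: ge_ereal_sup => _ [F [finF FS] <-].
rewrite fsbig_finite //= sumEFin lee_fin.
set f := fset_set F.
have fS U : U \in f -> ip_blocks b U /\ A (DivU alpha b U).
  by rewrite in_fset_set // => /set_mem /FS.
have uf : uniq f := fset_uniq f.
have outside_l : \sum_(U <- f | U \notin l) Leb U + \sum_(U <- l) Leb U <= ip_len b.
  rewrite -big_filter -big_cat sum_Leb_le_len //.
    rewrite cat_uniq filter_uniq // ul andbT.
    by apply/hasPn => U Ul; rewrite mem_filter Ul.
  by move=> U; rewrite mem_cat mem_filter => /orP[/andP[_ /fS[]] | /lb].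
have inside_l : \sum_(U <- f | U \in l) Leb U <=
                \sum_(U <- l | `[< A (DivU alpha b U) >]) Leb U.
  rewrite -big_filter -[leRHS]big_filter ler_sum_uniq_subset ?filter_uniq //.
    move=> U; rewrite !mem_filter => /andP[Ul Uf]; rewrite Ul andbT.
    by apply/asboolP; exact: (fS U Uf).2.
  by move=> U; rewrite mem_filter => /andP[_ /lb /Leb_ge0].
rewrite (bigID (mem l)) /=.
rewrite (bigID (fun U => `[< A (DivU alpha b U) >]) xpredT) /= in outside_l.
lra.
Qed.

Lemma sum_Leb_le_M_meas g l B : uniq l ->
  {in l, forall V, ip_blocks g V /\ B (DivU alpha g V)} ->
  ((\sum_(V <- l) Leb V)%:E <= M_meas alpha g B)%E.
Proof.
move=> ul lg; apply: esum_ge; exists [set` l]; last by rewrite -fsbig_seq // sumEFin.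
by split; [exact: finite_seq | move=> V /lg].
Qed.

Lemma M_meas_le_nbhd b g s e A : is_correspondence b g s ->
  \sum_(p <- s) `|Leb p.1 - Leb p.2| + ip_len b - \sum_(p <- s) Leb p.1 <= e ->
  (forall p, p \in s -> `|DivU alpha b p.1 - DivU alpha g p.2| < e) ->
  (M_meas alpha b A <= M_meas alpha g (nbhd_e dR A e) + e%:E)%E.
Proof.
move=> hs hlen hdiv; have [u1 u2] := correspondence_uniq hs; have [hin _] := hs.
set inA := fun p : (R * R) * (R * R) => `[< A (DivU alpha b p.1) >].
have matched : ((\sum_(p <- s | inA p) Leb p.2)%:E <=
                M_meas alpha g (nbhd_e dR A e))%E.
  rewrite -big_filter -(big_map snd xpredT).
  apply: sum_Leb_le_M_meas.
    exact: subseq_uniq (map_subseq _ (filter_subseq _ _)) u2.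
  move=> V /mapP[p]; rewrite mem_filter => /andP[/asboolP Ap ps] ->.
  split; first exact: (hin p ps).2.
  by exists (DivU alpha b p.1) => //; rewrite distrC hdiv.
have fst_blocks : {in map fst s, forall U, ip_blocks b U}.
  by move=> _ /mapP[p ps ->]; exact: (hin p ps).1.
have unmatched := M_meas_le_len_sub A u1 fst_blocks.
rewrite big_map in unmatched.
have trade : \sum_(p <- s | inA p) Leb p.1 <=
             \sum_(p <- s | inA p) Leb p.2 + \sum_(p <- s) `|Leb p.1 - Leb p.2|.
  rewrite [X in _ + X](bigID inA) /= addrA -big_split /= ler_wpDr ?sumr_ge0 //.
  by rewrite ler_sum // => p _; rewrite -lerBlDl ler_norm.
apply: le_trans unmatched _; apply: le_trans (leeD2r _ matched).
rewrite -EFinD lee_fin.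
by rewrite [\sum_(p <- s) Leb p.1](bigID inA) /= in hlen; lra.
Qed.

End Measure.

Section GHP.
Variable R : realType.

Lemma is_metric_ge0 (Z : Type) (d : Z -> Z -> R) x y : is_metric d -> 0 <= d x y.
Proof.
move=> [d0 [dC dtri]]; have := dtri x y x.
by rewrite (dC y x) (d0 x x).2 //; lra.
Qed.

Lemma is_metric_normB : is_metric (fun x y : R => `|x - y|).
Proof.
split; [|split] => [x y|x y|x y z]; last exact: ler_distD.
  by split=> [/eqP|->]; rewrite ?subrr ?normr0 // normr_eq0 subr_eq0 => /eqP.
exact: distrC.
Qed.

Lemma ghp_dist_le (X Y : rmms R) (Z : Type) (dZ : Z -> Z -> R)
    (f : car X -> Z) (g : car Y -> Z) :
  is_metric dZ -> isometric_on (@pts R X) (@dist R X) dZ f ->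
  isometric_on (@pts R Y) (@dist R Y) dZ g ->
  ghp_dist X Y <=
  Num.max (hausdorff dZ (f @` @pts R X) (g @` @pts R Y))
    (Num.max (dZ (f (Defs.root X)) (g (Defs.root Y)))
       (prokhorov dZ (fun A => @meas R X (f @^-1` A))
                     (fun A => @meas R Y (g @^-1` A)))).
Proof.
move=> dZm fX gY; apply: ge_inf; last by exists Z, dZ, f, g.
exists 0 => _ [Z' [d' [f' [g' [d'm _ _ ->]]]]].
by rewrite !le_max (is_metric_ge0 _ _ d'm) orbT.
Qed.

Lemma hausdorff_le (Z : Type) (d : Z -> Z -> R) (A B : set Z) (e : R) :
  0 < e -> A `<=` nbhd_e d B e -> B `<=` nbhd_e d A e -> hausdorff d A B <= e.
Proof.
by move=> e0 AB BA; apply: ge_inf => //; exists 0 => r [/ltW].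
Qed.

Lemma prokhorov_le (Z : Type) (d : Z -> Z -> R) (mu nu : set Z -> \bar R)
    (e : R) :
  0 < e ->
  (forall A, closed_d d A ->
     (mu A <= nu (nbhd_e d A e) + e%:E)%E /\
     (nu A <= mu (nbhd_e d A e) + e%:E)%E) ->
  prokhorov d mu nu <= e.
Proof.
by move=> e0 mu_nu; apply: ge_inf => //; exists 0 => r [/ltW].
Qed.

Lemma itv_sub_nbhd (D1 D2 e : R) : 0 <= D2 -> `|D1 - D2| < e ->
  `[0, D1]%classic `<=` nbhd_e dR `[0, D2]%classic e.
Proof.
move=> D20 D12 x /=; rewrite in_itv /= => /andP[x0 xD1].
exists (Num.min x D2).
  by rewrite /= in_itv /= le_min x0 D20 ge_min lexx orbT.
have := ler_norm (D1 - D2); case: (leP x D2) => [_|D2x] ?.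
  by rewrite subrr normr0 (le_lt_trans _ D12).
by rewrite ger0_norm ?subr_ge0 ?(ltW D2x); lra.
Qed.

End GHP.

Section Lipschitz.
Variables (R : realType) (alpha : R).
Implicit Types (b g : IP R).

Lemma ghp_T_le_distortion b g s e :
  has_diversity alpha b -> has_diversity alpha g -> is_correspondence b g s ->
  distortion alpha b g s < e -> ghp_dist (T_tree alpha b) (T_tree alpha g) <= e.
Proof.
move=> hb hg hs.
rewrite !gt_max => /andP[/andP[len_b len_g] /andP[div_s div_inf]].
have e0 : 0 < e by apply: le_lt_trans div_inf.
have div_p p : p \in s -> `|DivU alpha b p.1 - DivU alpha g p.2| < e.
  by move=> ps; apply: le_lt_trans div_s; exact: (le_bigmax_seq 0 p xpredT _ ps).
have hs' := correspondence_swap hs.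
have isom (X : set R) : isometric_on X dR dR id by [].
have := ghp_dist_le (X := T_tree alpha b) (Y := T_tree alpha g)
  (@is_metric_normB R) (isom _) (isom _).
move=> /le_trans -> //=.
rewrite !ge_max; apply/and3P; split.
- apply: hausdorff_le; rewrite // !image_id; apply: itv_sub_nbhd;
    by rewrite ?Div_inf_ge0 // distrC.
- by rewrite subrr normr0 ltW.
- apply: prokhorov_le => // A _; split; first exact: M_meas_le_nbhd (ltW len_b) _.
  apply: M_meas_le_nbhd hs' _ _.
    by rewrite !big_map (eq_bigr _ (fun p _ => distrC _ _)) ltW.
  by move=> _ /mapP[p ps ->]; rewrite distrC div_p.
Qed.

Lemma ghp_T_le_d_alpha b g :
  has_diversity alpha b -> has_diversity alpha g ->
  ghp_dist (T_tree alpha b) (T_tree alpha g) <= d_alpha alpha b g.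
Proof.
move=> hb hg; apply/ler_addgt0Pr => e.
rewrite -(ltrDl (d_alpha alpha b g)) => /inf_lt[].
  by exists (distortion alpha b g [::]), [::]; split => // p; rewrite in_nil.
by move=> _ [s hs <-]; exact: ghp_T_le_distortion.
Qed.

End Lipschitz.

Theorem corollary2p5 (R : realType) (alpha : R) (halpha : 0 < alpha < 1)
  (beta : IP R) (hbeta : has_diversity alpha beta) (eps : R) (heps : 0 < eps) :
  exists2 delta : R, 0 < delta &
    forall gamma : IP R, has_diversity alpha gamma ->
      d_alpha alpha beta gamma < delta ->
      ghp_dist (T_tree alpha beta) (T_tree alpha gamma) < eps.
Proof.
exists eps => // gamma hgamma; apply: le_lt_trans.
exact: ghp_T_le_d_alpha.
Qed.
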